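(* For every real $\alpha$ with $0<\alpha<1/2$ there exists a positive constant $c_\alpha$ such that for every real $M\ge 2$, \[ \prod_{p\le M}\Bigl(p^{2\alpha-2}\Bigl(1-\frac1p\Bigr)^{2\alpha}+\frac2p\Bigl(1-\frac1p\Bigr)+\Bigl(1-\frac1p\Bigr)^{2-2\alpha}\Bigr)\ge c_\alpha(\log M)^{2\alpha}, \] where the product runs over primes $p\le M$. *)

From Stdlib Require Import Reals ZArith Znumtheory List Lra.
Open Scope R_scope.

Definition is_prime_nat (p : nat) : bool :=
  if prime_dec (Z.of_nat p) then true else false.

Definition lemma7_factor (alpha : R) (p : nat) : R :=
  let q := INR p in
  Rpower q (2*alpha - 2) * Rpower (1 - 1/q) (2*alpha)
  + 2 / q * (1 - 1/q)
  + Rpower (1 - 1/q) (2 - 2*alpha).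

Fixpoint prod_primes_upto (f : nat -> R) (N : nat) : R :=
  match N with
  | O => 1
  | S n => (if is_prime_nat (S n) then f (S n) else 1) * prod_primes_upto f n
  end.

(* primes p <= M for real M >= 0 are exactly primes p <= floor M *)
Definition prod_primes_le (f : nat -> R) (M : R) : R :=
  prod_primes_upto f (Z.to_nat (Int_part M)).

(* Write the local factor at p as h(p) (p/(p-1))^(2 alpha) with
   h(p) = factor(p) (1 - 1/p)^(2 alpha).  Mertens-type growth comes from the
   Euler product: expanding each p/(p-1) as a geometric series and keeping the
   terms given by the factorisations of 1, ..., N shows that the product over
   p <= N dominates the harmonic sum, hence ln (N+1).  The correction h(p) is
   positive and at least 1 as soon as p^(2 alpha) >= 12, so the product of the
   h(p) is bounded below by the finite product of min(h(p), 1). *)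

From Stdlib Require Import Reals ZArith Znumtheory Lia Lra Psatz.
Open Scope R_scope.

Lemma is_prime_nat_ge2 p : is_prime_nat p = true -> (2 <= p)%nat.
Proof.
unfold is_prime_nat; destruct (prime_dec (Z.of_nat p)) as [Hp|]; [|discriminate].
intros _; pose proof (prime_ge_2 _ Hp); lia.
Qed.

Section PrimeProducts.
Variables f g : nat -> R.

Lemma prod_primes_upto_ext N :
  (forall p, is_prime_nat p = true -> f p = g p) ->
  prod_primes_upto f N = prod_primes_upto g N.
Proof.
intros Hfg; induction N as [|N IH]; simpl; [reflexivity|].
destruct (is_prime_nat (S N)) eqn:Hp; rewrite IH; [rewrite Hfg|]; auto.
Qed.

Lemma prod_primes_upto_mul N :
  prod_primes_upto (fun p => f p * g p) N = prod_primes_upto f N * prod_primes_upto g N.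
Proof.
induction N as [|N IH]; simpl; [ring|].
destruct (is_prime_nat (S N)); rewrite IH; ring.
Qed.

Lemma prod_primes_upto_pos N :
  (forall p, is_prime_nat p = true -> 0 < f p) -> 0 < prod_primes_upto f N.
Proof.
intros Hf; induction N as [|N IH]; simpl; [lra|].
destruct (is_prime_nat (S N)) eqn:Hp; [apply Rmult_lt_0_compat; auto|lra].
Qed.

Lemma prod_primes_upto_le N :
  (forall p, is_prime_nat p = true -> 0 <= f p <= g p) ->
  prod_primes_upto f N <= prod_primes_upto g N.
Proof.
intros Hfg.
assert (H : 0 <= prod_primes_upto f N <= prod_primes_upto g N).
{ induction N as [|N IH]; simpl; [lra|].
  destruct (is_prime_nat (S N)) eqn:Hp; [|lra].
  destruct (Hfg _ Hp); split; [apply Rmult_le_pos|apply Rmult_le_compat]; lra. }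
apply H.
Qed.

Lemma prod_primes_upto_Rpower N e :
  (forall p, is_prime_nat p = true -> 0 < f p) ->
  prod_primes_upto (fun p => Rpower (f p) e) N = Rpower (prod_primes_upto f N) e.
Proof.
intros Hf; induction N as [|N IH]; simpl.
- unfold Rpower; rewrite ln_1, Rmult_0_r, exp_0; reflexivity.
- destruct (is_prime_nat (S N)) eqn:Hp.
  + rewrite IH, Rpower_mult_distr; auto using prod_primes_upto_pos.
  + rewrite !Rmult_1_l, IH; reflexivity.
Qed.

Section AtMostOne.
Hypothesis f_bounds : forall p, is_prime_nat p = true -> 0 < f p <= 1.

Lemma prod_primes_upto_antitone N k :
  prod_primes_upto f (k + N) <= prod_primes_upto f N.
Proof.
induction k as [|k IH]; simpl; [lra|].
pose proof (prod_primes_upto_pos (k + N) (fun p Hp => proj1 (f_bounds p Hp))).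
destruct (is_prime_nat (S (k + N))) eqn:Hp; [|lra].
pose proof (f_bounds _ Hp); nra.
Qed.

Lemma prod_primes_upto_ge_stationary P0 N :
  (forall p, is_prime_nat p = true -> (P0 < p)%nat -> f p = 1) ->
  prod_primes_upto f P0 <= prod_primes_upto f N.
Proof.
intros Hf1; destruct (Nat.le_gt_cases P0 N) as [HN|HN].
- replace N with (N - P0 + P0)%nat by lia.
  induction (N - P0)%nat as [|k IH]; simpl; [lra|].
  destruct (is_prime_nat (S (k + P0))) eqn:Hp; [rewrite Hf1 by (auto; lia)|]; lra.
- replace P0 with (P0 - N + N)%nat by lia; apply prod_primes_upto_antitone.
Qed.
End AtMostOne.
End PrimeProducts.

Fixpoint harmonic (N : nat) : R :=
  match N with O => 0 | S n => harmonic n + / INR (S n) end.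

Lemma ln_1_plus_le x : 0 < x -> ln (1 + x) <= x.
Proof.
intros Hx; destruct (Rle_or_lt (ln (1 + x)) x) as [|Hlt]; [assumption|].
apply exp_increasing in Hlt; rewrite exp_ln in Hlt by lra.
pose proof (exp_ineq1_le x); lra.
Qed.

Lemma ln_le_harmonic N : ln (INR N + 1) <= harmonic N.
Proof.
induction N as [|N IH]; cbn [harmonic]; [rewrite Rplus_0_l, ln_1; lra|].
rewrite S_INR; pose proof (pos_INR N).
assert (Hinv : 0 < / (INR N + 1)) by (apply Rinv_0_lt_compat; lra).
replace (INR N + 1 + 1) with ((INR N + 1) * (1 + / (INR N + 1))) by (field; lra).
rewrite ln_mult by lra.
pose proof (ln_1_plus_le _ Hinv); lra.
Qed.

Lemma Rpower_INR_eventually_ge e C : 0 < e -> 0 < C ->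
  exists P0 : nat, forall p, (P0 < p)%nat -> C <= Rpower (INR p) e.
Proof.
intros He HC; set (B := Rpower C (/ e)).
assert (HB : 0 < B) by apply exp_pos.
destruct (archimed B) as [HupB _].
exists (Z.to_nat (up B)); intros p Hp.
apply lt_INR in Hp; rewrite INR_IZR_INZ, Z2Nat.id in Hp by (apply le_IZR; lra).
replace C with (Rpower B e) by (unfold B; rewrite Rpower_mult, Rinv_l, Rpower_1; lra).
apply Rle_Rpower_l; lra.
Qed.

Lemma Rpower_antitone_base_le1 y e1 e2 : 0 < y <= 1 -> e1 <= e2 ->
  Rpower y e2 <= Rpower y e1.
Proof.
intros Hy He; unfold Rpower.
assert (ln_y_le0 : ln y <= 0).
{ destruct (Rle_lt_or_eq_dec _ _ (proj2 Hy)) as [Hlt| ->]; [|rewrite ln_1; lra].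
  rewrite <- ln_1; left; apply ln_increasing; lra. }
destruct (Rle_lt_or_eq_dec _ _ He) as [Hlt| ->]; [|lra].
destruct (Rle_lt_or_eq_dec _ _ ln_y_le0) as [Hneg| ->]; [|rewrite !Rmult_0_r; lra].
left; apply exp_increasing; nra.
Qed.

Lemma Rpower_2 y : 0 < y -> Rpower y 2 = y * y.
Proof. intros Hy; replace 2 with (INR 2) by (simpl; lra); rewrite Rpower_pow by lra; simpl; ring. Qed.

Definition euler_factor (p : nat) : R := INR p / (INR p - 1).

Definition reduced_factor (a : R) (p : nat) : R :=
  lemma7_factor a p * Rpower (1 - 1 / INR p) (2 * a).

Section LocalFactor.
Variables (a : R) (p : nat).
Hypothesis p_ge2 : (2 <= p)%nat.

Let INR_p_ge2 : 2 <= INR p.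
Proof. apply (le_INR 2) in p_ge2; simpl in p_ge2; lra. Qed.

Let one_sub_inv_bounds : 1/2 <= 1 - 1 / INR p < 1.
Proof.
assert (0 < 1 / INR p <= 1/2); [|lra].
split; [apply Rdiv_lt_0_compat; lra|].
apply Rmult_le_reg_r with (INR p); [lra|]; field_simplify; lra.
Qed.

Lemma euler_factor_pos : 0 < euler_factor p.
Proof. apply Rdiv_lt_0_compat; lra. Qed.

Lemma lemma7_factor_split :
  lemma7_factor a p = reduced_factor a p * Rpower (euler_factor p) (2 * a).
Proof.
unfold reduced_factor; rewrite Rmult_assoc, Rpower_mult_distr by (auto using euler_factor_pos; lra).
replace ((1 - 1 / INR p) * euler_factor p) with 1 by (unfold euler_factor; field; lra).
unfold Rpower; rewrite ln_1, Rmult_0_r, exp_0; ring.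
Qed.

Lemma reduced_factor_pos : 0 < reduced_factor a p.
Proof.
unfold reduced_factor, lemma7_factor.
pose proof (exp_pos ((2 * a - 2) * ln (INR p))).
pose proof (exp_pos ((2 * a) * ln (1 - 1 / INR p))).
pose proof (exp_pos ((2 - 2 * a) * ln (1 - 1 / INR p))).
assert (0 < 2 / INR p) by (apply Rdiv_lt_0_compat; lra).
unfold Rpower; apply Rmult_lt_0_compat; [|assumption].
apply Rplus_lt_0_compat; [apply Rplus_lt_0_compat|]; try apply Rmult_lt_0_compat; lra.
Qed.

(* The constant 12 makes [(1 - x)^2 (1 + 2x + 12x^2) >= 1] hold on [0 < x <= 1/2]. *)
Lemma reduced_factor_ge1 : 0 < a < 1/2 -> 12 <= Rpower (INR p) (2 * a) ->
  1 <= reduced_factor a p.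
Proof.
intros Ha Hbig; unfold reduced_factor, lemma7_factor.
set (x := 1 / INR p) in *; set (y := 1 - x) in *; set (B := Rpower y (2 * a)).
assert (Hx : 0 < x <= 1/2) by (split; [apply Rdiv_lt_0_compat|unfold y in *]; lra).
assert (HyB : y <= B).
{ unfold B; rewrite <- (Rpower_1 y) at 1 by lra.
  apply Rpower_antitone_base_le1; lra. }
assert (HyyB : Rpower y (2 - 2 * a) * B = y * y).
{ unfold B; rewrite <- Rpower_plus, <- Rpower_2 by lra; f_equal; ring. }
assert (Hq : Rpower (INR p) (2 * a - 2) = Rpower (INR p) (2 * a) * (x * x)).
{ unfold Rminus; rewrite Rpower_plus, Rpower_Ropp, Rpower_2 by lra.
  unfold x; field; lra. }
replace (2 / INR p) with (2 * x) by (unfold x; field; lra).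
rewrite Hq.
replace ((Rpower (INR p) (2 * a) * (x * x) * B + 2 * x * y + Rpower y (2 - 2 * a)) * B)
  with (Rpower (INR p) (2 * a) * (x * x) * (B * B) + 2 * x * y * B + Rpower y (2 - 2 * a) * B)
  by ring.
rewrite HyyB.
assert (quadratic_term : 12 * (x * x) * (y * y) <= Rpower (INR p) (2 * a) * (x * x) * (B * B))
  by (apply Rmult_le_compat; nra).
assert (linear_term : 2 * x * y * y <= 2 * x * y * B) by (apply Rmult_le_compat_l; nra).
assert (polynomial_bound :
  12 * x * x * (1 - x) * (1 - x) + 2 * x * (1 - x) * (1 - x) + (1 - x) * (1 - x) >= 1) by nra.
unfold y in *; nra.
Qed.
End LocalFactor.
Close Scope R_scope.

From mathcomp Require Import all_boot all_order all_algebra.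
From mathcomp Require Import ring zify.
From mathcomp Require Import Rstruct.
Import Order.TTheory GRing.Theory Num.Theory.

Section EulerProduct.
Variable F : realFieldType.
Local Open Scope ring_scope.

Lemma sum_geometric_le (x : F) n : 0 <= x < 1 -> \sum_(k < n) x ^+ k <= (1 - x)^-1.
Proof.
case/andP=> x_ge0 x_lt1; have x1_gt0 : 0 < 1 - x by rewrite subr_gt0.
rewrite -(ler_pM2l x1_gt0) mulfV ?gt_eqF // -opprB mulNr -subrX1 opprB.
by rewrite gerBl exprn_ge0.
Qed.

Lemma prod_logn (N m : nat) : (0 < m)%N -> (m <= N)%N ->
  (\prod_(i < N.+1) i ^ logn i m)%N = m.
Proof.
move=> m_gt0 m_le_N; rewrite -(big_mkord xpredT (fun i => i ^ logn i m)%N).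
rewrite (big_cat_nat _ (n := m.+1)) //= [X in (_ * X)%N]big1_seq ?muln1.
  by rewrite -[RHS](partnT m_gt0) /partn.
by move=> i /andP[_]; rewrite mem_index_iota => /andP[m_lt_i _]; rewrite ltn_log0.
Qed.

Variable N : nat.

(* The weight of exponent [k] at index [i]: [i^-k] for a prime [i], and the
   indicator of [k = 0] otherwise, so that the product over all indices of the
   sums of weights is the Euler product, while expanding it yields the sum over
   all exponent vectors. *)
Definition prime_power_weight (i k : 'I_N.+1) : F :=
  if prime i then (i%:R^-1) ^+ k else (k == 0 :> nat)%:R.

Definition exponent_vector (n : 'I_N) : {ffun 'I_N.+1 -> 'I_N.+1} :=
  [ffun i : 'I_N.+1 => inord (logn i n.+1)].

Lemma logn_lt_bound p (n : 'I_N) : (logn p n.+1 < N.+1)%N.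
Proof. by have := ltn_logl p (ltn0Sn n); have := ltn_ord n; lia. Qed.

Lemma prime_power_weight_ge0 i k : 0 <= prime_power_weight i k.
Proof. by rewrite /prime_power_weight; case: ifP => _; rewrite ?exprn_ge0 ?invr_ge0. Qed.

Lemma sum_prime_power_weight_le (i : 'I_N.+1) :
  \sum_(k < N.+1) prime_power_weight i k <=
  (if prime i then i%:R / (i%:R - 1) else 1 : F).
Proof.
rewrite /prime_power_weight; case: ifP => [i_prime|_].
  have i_gt1 : (1 : F) < i%:R by rewrite ltr1n prime_gt1.
  have -> : (i%:R : F) / (i%:R - 1) = (1 - i%:R^-1)^-1.
    by field; rewrite subr_eq0 !gt_eqF // (lt_trans ltr01).
  by apply: sum_geometric_le; rewrite invr_ge0 ler0n invf_lt1 // (lt_trans ltr01).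
by rewrite big_ord_recl /= big1 ?addr0.
Qed.

Lemma exponent_vector_weight (n : 'I_N) :
  \prod_(i < N.+1) prime_power_weight i (exponent_vector n i) = (n.+1%:R)^-1.
Proof.
rewrite (eq_bigr (fun i : 'I_N.+1 => (((i ^ logn i n.+1)%N)%:R : F)^-1)).
  by rewrite prodfV -natr_prod prod_logn.
move=> i _; rewrite /prime_power_weight ffunE inordK ?logn_lt_bound //.
case: ifP => i_prime; first by rewrite natrX exprVn.
by rewrite lognE i_prime /= invr1.
Qed.

Lemma exponent_vector_inj : injective exponent_vector.
Proof.
move=> n1 n2 /ffunP E; apply/val_inj/succn_inj/eqn_from_log => // p.
have [p_le_N|p_gt_N] := ltnP p N.+1.
  by move/(_ (Ordinal p_le_N))/(congr1 val): E; rewrite !ffunE /= !inordK ?logn_lt_bound.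
by rewrite !ltn_log0 //; apply: leq_ltn_trans (ltn_ord _) p_gt_N.
Qed.

Theorem harmonic_le_euler_product :
  \sum_(n < N) (n.+1%:R : F)^-1 <= \prod_(i < N.+1 | prime i) (i%:R / (i%:R - 1)).
Proof.
apply: (@le_trans _ _ (\prod_(i < N.+1) \sum_(k < N.+1) prime_power_weight i k)); last first.
  rewrite [X in _ <= X]big_mkcond /=; apply: ler_prod => i _.
  by rewrite sumr_ge0 ?sum_prime_power_weight_le // => k _; apply: prime_power_weight_ge0.
have -> : \sum_(n < N) (n.+1%:R : F)^-1 =
    \sum_(n in [set: 'I_N]) \prod_(i < N.+1) prime_power_weight i (exponent_vector n i).
  by apply: eq_big => [n|n _]; rewrite ?inE ?exponent_vector_weight.
rewrite bigA_distr_bigA /= (bigID (mem (exponent_vector @: [set: 'I_N]))) /=.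
rewrite big_imset /=; last by move=> n1 n2 _ _; apply: exponent_vector_inj.
rewrite lerDl sumr_ge0 // => f _.
by apply: prodr_ge0 => i _; apply: prime_power_weight_ge0.
Qed.
End EulerProduct.
Lemma is_prime_natE n : is_prime_nat n = prime n.
Proof.
rewrite /is_prime_nat; case: prime_dec => [Hp|Hp].
- symmetry; apply/primeP; split.
    have := prime_ge_2 _ Hp; lia.
  move=> d /dvdnP [q Hq]; subst n.
  have Hd : (Z.of_nat d | Z.of_nat (q * d)).
    by exists (Z.of_nat q); lia.
  have := prime_divisors _ Hp _ Hd.
  have := prime_ge_2 _ Hp.
  move=> H2 H; apply/orP.
  case: H => [H|[H|[H|H]]]; [lia | left; apply/eqP; lia | right; apply/eqP; lia | lia].
- symmetry; apply/negbTE/negP => /primeP [H1 H2]; apply: Hp.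
  apply/prime_alt; split; first lia.
  move=> k Hk [q Hq].
  have q0 : (0 <= q)%Z by nia.
  have Hn : n = (Z.to_nat q * Z.to_nat k)%N.
    apply: Nat2Z.inj; rewrite Nat2Z.inj_mul !Z2Nat.id; lia.
  have : Z.to_nat k %| n by rewrite Hn dvdn_mull.
  move/H2 => /orP [/eqP E|/eqP E]; lia.
Qed.

Lemma prod_primes_uptoE (f : nat -> R) N :
  prod_primes_upto f N = (\prod_(i < N.+1 | prime i) f i)%R.
Proof.
elim: N => [|N IH]; first by rewrite big_mkcond big_ord_recr big_ord0 /= mul1r.
by rewrite /= IH [in RHS]big_mkcond big_ord_recr /= -big_mkcond is_prime_natE RmultE mulrC.
Qed.

Lemma harmonicE N : harmonic N = (\sum_(n < N) (n.+1%:R : R)^-1)%R.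
Proof.
elim: N => [|N IH]; first by rewrite big_ord0.
by rewrite big_ord_recr -IH -INRE -RinvE.
Qed.

Open Scope R_scope.

Lemma harmonic_le_prod_euler_factor N : harmonic N <= prod_primes_upto euler_factor N.
Proof.
rewrite harmonicE prod_primes_uptoE; apply/RleP.
rewrite (eq_bigr (fun i : 'I_N.+1 => (i%:R / (i%:R - 1))%R)) => [|i _].
  exact: harmonic_le_euler_product.
by rewrite /euler_factor INRE.
Qed.

Lemma ln_le_euler_product M : 1 <= M -> ln M <= prod_primes_le euler_factor M.
Proof.
move=> M_ge1; rewrite /prod_primes_le.
have [floor_le floor_gt] := base_Int_part M.
have floor_ge0 : Z.le 0 (Int_part M) by apply: le_IZR; lra.
have M_lt : M < INR (Z.to_nat (Int_part M)) + 1.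
  by rewrite INR_IZR_INZ Z2Nat.id //; lra.
apply: Rle_trans (harmonic_le_prod_euler_factor _).
apply: Rle_trans (ln_le_harmonic _).
by left; apply: ln_increasing; lra.
Qed.

Theorem lemma7 : forall alpha : R, 0 < alpha < 1/2 ->
  exists c : R, 0 < c /\
    forall M : R, 2 <= M ->
      prod_primes_le (lemma7_factor alpha) M >= c * Rpower (ln M) (2*alpha).
Proof.
move=> a Ha.
have [P0 HP0] := Rpower_INR_eventually_ge (2 * a) 12 ltac:(lra) ltac:(lra).
pose m p := Rmin (reduced_factor a p) 1.
have m_bounds p : is_prime_nat p = true -> 0 < m p <= 1.
  move=> /is_prime_nat_ge2 p_ge2; split; last exact: Rmin_r.
  by apply: Rmin_pos; [apply: reduced_factor_pos | lra].
have m_pos p (Hp : is_prime_nat p = true) := proj1 (m_bounds p Hp).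
exists (prod_primes_upto m P0); split; first exact: prod_primes_upto_pos.
move=> M M_ge2; rewrite /prod_primes_le.
set N := Z.to_nat (Int_part M).
rewrite (prod_primes_upto_ext _ (fun p => reduced_factor a p * Rpower (euler_factor p) (2 * a)));
  last by move=> p /is_prime_nat_ge2; apply: lemma7_factor_split.
rewrite prod_primes_upto_mul prod_primes_upto_Rpower;
  last by move=> p /is_prime_nat_ge2; apply: euler_factor_pos.
apply: Rle_ge; apply: Rmult_le_compat.
- exact: Rlt_le (prod_primes_upto_pos _ _ m_pos).
- exact: Rlt_le (exp_pos _).
- apply: Rle_trans (prod_primes_upto_ge_stationary _ m_bounds P0 N _) _.
    move=> p Hp /HP0 p_big; apply: Rmin_right.
    by apply: reduced_factor_ge1 => //; apply: is_prime_nat_ge2.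
  apply: prod_primes_upto_le => p Hp; have := m_bounds p Hp.
  by have := Rmin_l (reduced_factor a p) 1; rewrite /m; lra.
- apply: Rle_Rpower_l; first lra.
  have ln_pos : 0 < ln M by rewrite -ln_1; apply: ln_increasing; lra.
  by split => //; apply: (ln_le_euler_product M); lra.
Qed.
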